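(* Let $(E,(\cdot,\cdot),\mathcal H)$ be an extended affine Lie algebra with root system $R$. Then $E$ is tame if and only if for each $\sigma\in R^0$, $$E_\sigma\cap E_c^\perp=Z(E_c)\cap\sum_{\alpha\in R^\times}[E_{\alpha+\sigma},E_{-\alpha}].$$
   Context: All Lie algebras are over $\mathbb C$. An extended affine Lie algebra (EALA) is a triple $(E,(\cdot,\cdot),\mathcal H)$ where $E$ is a Lie algebra, $\mathcal H$ a subalgebra and $(\cdot,\cdot)$ a bilinear form on $E$ such that: (EA1) the form is symmetric, non-degenerate and invariant; (EA2) $\mathcal H$ is finite-dimensional, $E=\bigoplus_{\alpha\in\mathcal H^*}E_\alpha$ with $E_\alpha=\{x:[h,x]=\alpha(h)x\ \forall h\in\mathcal H\}$ and $E_0=\mathcal H$; the root system is $R=\{\alpha:E_\alpha\neq0\}$ (with $E_\beta=0$ for $\beta\notin R$); $t_\alpha\in\mathcal H$ is given by $\alpha(h)=(h,t_\alpha)$, $(\alpha,\beta):=(t_\alpha,t_\beta)$, $R^\times=\{\alpha\in R:(\alpha,\alpha)\neq0\}$, $R^0=R\setminus R^\times$; (EA3) $\mathrm{ad}\,x$ is locally nilpotent for $x\in E_\alpha$, $\alpha\in R^\times$; (EA4) $R$ is discrete; (EA5) $R^\times$ is connected (not a union of two nonempty mutually orthogonal subsets) and every isotropic root is non-isolated. Root systems are assumed reduced. The core $E_c$ is the subalgebra generated by the $E_\alpha$, $\alpha\in R^\times$; $E_c^\perp$ is its orthogonal complement in $E$ and $Z(E_c)$ its center. $E$ is tame if $E_c^\perp=Z(E_c)$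 (equivalently $E_c^\perp\subseteq Z(E_c)$). *)

From HB Require Import structures.
From mathcomp Require Import all_boot all_order all_algebra complex.
From mathcomp Require Import Rstruct.
Set Implicit Arguments.
Unset Strict Implicit.
Unset Printing Implicit Defensive.
Import Order.TTheory GRing.Theory Num.Theory.
Local Open Scope ring_scope.

Definition CC : numClosedFieldType := (Rdefinitions.R)[i].

Section EALA.
Variable E : lmodType CC.
Variable br : E -> E -> E.
Variable form : E -> E -> CC.
Variable H : E -> Prop.

Definition is_lie_algebra : Prop :=
  [/\ forall (a : CC) (x y z : E), br (a *: x + y) z = a *: br x z + br y z,
      forall (a : CC) (x y z : E), br z (a *: x + y) = a *: br z x + br z y,
      forall x : E, br x x = 0
    & forall x y z : E, br x (br y z) + br y (br z x) + br z (br x y) = 0].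

Definition EA1 : Prop :=
  [/\ forall (a : CC) (x y z : E), form (a *: x + y) z = a * form x z + form y z,
      forall x y : E, form x y = form y x,
      forall x : E, (forall y : E, form x y = 0) -> x = 0
    & forall x y z : E, form (br x y) z = form x (br y z)].

(* Elements of H^* are represented by functions E -> C, only their values
   on H matter. *)
Definition root_space (alpha : E -> CC) (x : E) : Prop :=
  forall h, H h -> br h x = alpha h *: x.

Definition is_root (alpha : E -> CC) : Prop :=
  exists x, root_space alpha x /\ x <> 0.

Definition t_of (alpha : E -> CC) (t : E) : Prop :=
  H t /\ forall h, H h -> alpha h = form h t.

Definition nonisotropic (alpha : E -> CC) : Prop :=
  exists t, t_of alpha t /\ form t t != 0.

Definition Rx (alpha : E -> CC) : Prop := is_root alpha /\ nonisotropic alpha.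
Definition R0 (alpha : E -> CC) : Prop := is_root alpha /\ ~ nonisotropic alpha.

Definition orth (alpha beta : E -> CC) : Prop :=
  forall ta tb, t_of alpha ta -> t_of beta tb -> form ta tb = 0.

Definition fadd (f g : E -> CC) : E -> CC := fun x => f x + g x.
Definition fopp (f : E -> CC) : E -> CC := fun x => - f x.
Definition fzero : E -> CC := fun _ => 0.

Definition EA2 : Prop :=
  [/\
      exists (n : nat) (hs : 'I_n -> E),
        forall x, H x <-> exists c : 'I_n -> CC, x = \sum_(i < n) c i *: hs i,
      forall x y, H x -> H y -> H (br x y),
      (* E is the sum of the root spaces (directness is automatic) *)
      forall x : E, exists s : seq ((E -> CC) * E),
        (forall p, List.In p s -> root_space p.1 p.2) /\
        x = \sum_(p <- s) p.2
    &
      forall x, root_space fzero x <-> H x].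

Definition EA3 : Prop :=
  forall alpha x, Rx alpha -> root_space alpha x ->
    forall y, exists n : nat, iter n (br x) y = 0.

(* (EA4): R is discrete in H^* (for the weak topology on the
   finite-dimensional space H^*, which is the usual one). *)
Definition EA4 : Prop :=
  forall alpha, is_root alpha ->
    exists (n : nat) (hs : 'I_n -> E) (eps : CC),
      [/\ (forall i, H (hs i)), 0 < eps &
          forall beta, is_root beta ->
            (forall i, `|beta (hs i) - alpha (hs i)| < eps) ->
            forall h, H h -> beta h = alpha h].

Definition EA5 : Prop :=
  (* R^x is connected *)
  (forall A B : (E -> CC) -> Prop,
     (forall alpha, Rx alpha <-> A alpha \/ B alpha) ->
     (exists alpha, A alpha) -> (exists beta, B beta) ->
     ~ (forall alpha beta, A alpha -> B beta -> orth alpha beta))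
  /\
  (forall sigma, R0 sigma -> exists alpha, Rx alpha /\ is_root (fadd alpha sigma)).

Definition reduced : Prop :=
  forall alpha, Rx alpha -> ~ is_root (fadd alpha alpha).

Definition is_EALA : Prop :=
  [/\ is_lie_algebra, EA1, EA2, EA3 & [/\ EA4, EA5 & reduced]].

Inductive core : E -> Prop :=
  | core_root : forall alpha x, Rx alpha -> root_space alpha x -> core x
  | core_zero : core 0
  | core_add : forall x y, core x -> core y -> core (x + y)
  | core_scale : forall (a : CC) x, core x -> core (a *: x)
  | core_br : forall x y, core x -> core y -> core (br x y).

Definition core_perp (x : E) : Prop := forall y, core y -> form x y = 0.

Definition core_center (x : E) : Prop := core x /\ forall y, core y -> br x y = 0.

Definition tame : Prop := forall x, core_perp x <-> core_center x.

Inductive bracket_sum (sigma : E -> CC) : E -> Prop :=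
  | bs_gen : forall alpha x y, Rx alpha -> root_space (fadd alpha sigma) x ->
      root_space (fopp alpha) y -> bracket_sum sigma (br x y)
  | bs_zero : bracket_sum sigma 0
  | bs_add : forall x y, bracket_sum sigma x -> bracket_sum sigma y ->
      bracket_sum sigma (x + y)
  | bs_scale : forall (a : CC) x, bracket_sum sigma x -> bracket_sum sigma (a *: x).

End EALA.

(* The core E_c is spanned by right-normed brackets [x_1, [x_2, ..., x_k]] of
   root vectors x_i in E_(a_i), a_i nonisotropic, and such a bracket lies in
   E_(a_1 + ... + a_k).  If E is tame, an element of E_sigma orthogonal to E_c
   is central, hence in E_c; by directness of the root space decomposition only
   brackets of weight sigma contribute, and as sigma is isotropic these have
   k >= 2, so they lie in [E_(alpha + sigma), E_(-alpha)] with alpha = -a_1.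
   Conversely Z(E_c) is always orthogonal to E_c, because t_a lies in
   [E_a, E_(-a)] and acts on E_a by the scalar (t_a, t_a) <> 0.  For x orthogonal
   to E_c, each homogeneous component of x is again orthogonal to the graded
   space E_c; a component of nonisotropic weight b vanishes, since it pairs
   nondegenerately with E_(-b), which lies in E_c, and the components of
   isotropic weight are central by hypothesis. *)

From mathcomp Require Import all_boot all_order all_algebra complex.
From mathcomp Require Import Rstruct.
From Stdlib Require Import Classical.
Set Implicit Arguments.
Unset Strict Implicit.
Unset Printing Implicit Defensive.
Import GRing.Theory.
Local Open Scope ring_scope.

Section ListSums.
Variables (T : Type) (V : nmodType).
Implicit Types (s : seq T) (F G : T -> V).

Lemma big_ind_In (K : V -> Prop) s F :
  K 0 -> (forall x y, K x -> K y -> K (x + y)) ->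
  (forall p, List.In p s -> K (F p)) -> K (\sum_(p <- s) F p).
Proof.
move=> K0 KD; elim: s => [|p s IHs] Ks; first by rewrite big_nil.
by rewrite big_cons; apply: KD; [apply: Ks; left | apply: IHs => q q_s; apply: Ks; right].
Qed.

Lemma eq_big_In s F G :
  (forall p, List.In p s -> F p = G p) -> \sum_(p <- s) F p = \sum_(p <- s) G p.
Proof.
elim: s => [|p s IHs] FG; first by rewrite !big_nil.
by rewrite !big_cons FG; [rewrite IHs // => q q_s; apply: FG; right | left].
Qed.

Lemma split_big_In (Q : T -> Prop) F s :
  exists l1 l2, [/\ forall q, List.In q l1 -> List.In q s /\ Q q,
                    forall q, List.In q l2 -> List.In q s /\ ~ Q q,
                    \sum_(p <- s) F p = \sum_(q <- l1) F q + \sum_(q <- l2) F q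
                  & (size l2 <= size s)%N].
Proof.
elim: s => [|p s [l1 [l2 [l1_s l2_s sumE size_l2]]]].
  by exists [::], [::]; split => //; rewrite !big_nil addr0.
have [Qp | nQp] := classic (Q p).
  exists (p :: l1), l2; split.
  - by move=> q [<-|/l1_s[q_s Qq]]; split=> //; [left | right].
  - by move=> q /l2_s[q_s nQq]; split=> //; right.
  - by rewrite !big_cons sumE addrA.
  - exact: leqW.
exists l1, (p :: l2); split.
- by move=> q /l1_s[q_s Qq]; split=> //; right.
- by move=> q [<-|/l2_s[q_s nQq]]; split=> //; [left | right].
- by rewrite !big_cons sumE addrCA.
- by [].
Qed.

End ListSums.

Section SumOf.
Variables (W : Type) (V : nmodType) (P : W -> V -> Prop).

Definition sum_of (y : V) : Prop := exists s : seq (W * V),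
  (forall p, List.In p s -> P p.1 p.2) /\ y = \sum_(p <- s) p.2.

Lemma sum_of0 : sum_of 0.
Proof. by exists [::]; rewrite big_nil. Qed.

Lemma sum_of_gen w v : P w v -> sum_of v.
Proof. by exists [:: (w, v)]; split=> [p [<-|]|]; rewrite ?big_seq1. Qed.

Lemma sum_ofD u v : sum_of u -> sum_of v -> sum_of (u + v).
Proof.
move=> [s [s_P ->]] [t [t_P ->]]; exists (s ++ t); split; last by rewrite big_cat.
by move=> p /(List.in_app_or s t)[/s_P|/t_P].
Qed.

Lemma sum_of_big (I : Type) (r : seq I) (F : I -> V) :
  (forall i, List.In i r -> sum_of (F i)) -> sum_of (\sum_(i <- r) F i).
Proof. exact: big_ind_In sum_of0 sum_ofD. Qed.

End SumOf.

Section ExtendedAffine.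
Variables (E : lmodType CC) (br : E -> E -> E) (form : E -> E -> CC) (H : E -> Prop).

Hypothesis lieE : is_lie_algebra br.

Lemma brDl z x y : br (x + y) z = br x z + br y z.
Proof. by case: lieE => lin _ _ _; have := lin 1 x y z; rewrite !scale1r. Qed.

Lemma brDr z x y : br z (x + y) = br z x + br z y.
Proof. by case: lieE => _ lin _ _; have := lin 1 x y z; rewrite !scale1r. Qed.

Lemma br0l z : br 0 z = 0.
Proof. by apply: (addrI (br 0 z)); rewrite -brDl !addr0. Qed.

Lemma br0r z : br z 0 = 0.
Proof. by apply: (addrI (br z 0)); rewrite -brDr !addr0. Qed.

Lemma brZl z a x : br (a *: x) z = a *: br x z.
Proof. by case: lieE => lin _ _ _; have := lin a x 0 z; rewrite !addr0 br0l addr0. Qed.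

Lemma brZr z a x : br z (a *: x) = a *: br z x.
Proof. by case: lieE => _ lin _ _; have := lin a x 0 z; rewrite !addr0 br0r addr0. Qed.

Lemma br_antisym x y : br x y = - br y x.
Proof.
case: lieE => _ _ alt _; apply/eqP; rewrite -addr_eq0.
by have := alt (x + y); rewrite brDl !brDr !alt add0r addr0 => ->.
Qed.

Lemma br_leibniz h x y : br h (br x y) = br (br h x) y + br x (br h y).
Proof.
case: lieE => _ _ _ jacobi; have := jacobi h x y.
rewrite [br y h]br_antisym [br y (br h x)]br_antisym -scaleN1r brZr scaleN1r.
by move/eqP; rewrite -addrA addr_eq0 opprD !opprK addrC => /eqP.
Qed.

Lemma br_suml (I : Type) (r : seq I) (F : I -> E) z :
  br (\sum_(i <- r) F i) z = \sum_(i <- r) br (F i) z.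
Proof. exact: (big_morph (br^~ z) (brDl z) (br0l z)). Qed.

Lemma br_sumr (I : Type) (r : seq I) (F : I -> E) z :
  br z (\sum_(i <- r) F i) = \sum_(i <- r) br z (F i).
Proof. exact: (big_morph (br z) (brDr z) (br0r z)). Qed.

Hypothesis formE : EA1 br form.

Lemma formC x y : form x y = form y x.
Proof. by case: formE. Qed.

Lemma form_invariant x y z : form (br x y) z = form x (br y z).
Proof. by case: formE. Qed.

Lemma form_nondeg x : x != 0 -> exists z, form x z != 0.
Proof.
case: formE => _ _ nondeg _ x0; apply: NNPP => nz; move/eqP: x0; apply; apply: nondeg => y.
by case: (eqVneq (form x y) 0) => // xy; case: nz; exists y.
Qed.

Lemma formDl z x y : form (x + y) z = form x z + form y z.
Proof. by case: formE => lin _ _ _; have := lin 1 x y z; rewrite scale1r mul1r. Qed.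

Lemma form0l z : form 0 z = 0.
Proof. by apply: (addrI (form 0 z)); rewrite -formDl !addr0. Qed.

Lemma formZl z a x : form (a *: x) z = a * form x z.
Proof. by case: formE => lin _ _ _; have := lin a x 0 z; rewrite !addr0 form0l addr0. Qed.

Lemma formNl z x : form (- x) z = - form x z.
Proof. by rewrite -scaleN1r formZl mulN1r. Qed.

Lemma formDr z x y : form z (x + y) = form z x + form z y.
Proof. by rewrite formC formDl !(formC z). Qed.

Lemma form0r z : form z 0 = 0.
Proof. by rewrite formC form0l. Qed.

Lemma formZr z a x : form z (a *: x) = a * form z x.
Proof. by rewrite formC formZl formC. Qed.

Lemma formNr z x : form z (- x) = - form z x.
Proof. by rewrite formC formNl formC. Qed.

Lemma form_suml (I : Type) (r : seq I) (F : I -> E) z :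
  form (\sum_(i <- r) F i) z = \sum_(i <- r) form (F i) z.
Proof. exact: (big_morph (form^~ z) (formDl z) (form0l z)). Qed.

Lemma form_sumr (I : Type) (r : seq I) (F : I -> E) z :
  form z (\sum_(i <- r) F i) = \sum_(i <- r) form z (F i).
Proof. exact: (big_morph (form z) (formDr z) (form0r z)). Qed.

Local Notation fzero := (@fzero E).

Hypothesis root_decomposition : forall x, sum_of (root_space br H) x.
Hypothesis E0_eq_H : forall x, root_space br H fzero x <-> H x.

Local Notation rs := (root_space br H).
Local Notation Rx := (Rx br form H).
Local Notation nonisotropic := (nonisotropic form H).
Local Notation core := (core br form H).
Local Notation core_perp := (core_perp br form H).
Local Notation core_center := (core_center br form H).
Local Notation bracket_sum := (bracket_sum br form H).

Definition same_weight (a b : E -> CC) : Prop := forall h, H h -> a h = b h.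

Lemma not_same_weight a b : ~ same_weight a b -> exists2 h, H h & a h != b h.
Proof.
move=> nab; apply: NNPP => nh; apply: nab => h Hh.
by case: (eqVneq (a h) (b h)) => // ab; case: nh; exists h.
Qed.

Lemma rs0 a : rs a 0.
Proof. by move=> h _; rewrite br0r scaler0. Qed.

Lemma rsD a x y : rs a x -> rs a y -> rs a (x + y).
Proof. by move=> x_a y_a h Hh; rewrite brDr x_a // y_a // scalerDr. Qed.

Lemma rsZ a c x : rs a x -> rs a (c *: x).
Proof. by move=> x_a h Hh; rewrite brZr x_a // !scalerA mulrC. Qed.

Lemma rsN a x : rs a x -> rs a (- x).
Proof. by rewrite -scaleN1r; apply: rsZ. Qed.

Lemma rs_same_weight a b x : same_weight a b -> rs a x -> rs b x.
Proof. by move=> ab x_a h Hh; rewrite x_a // ab. Qed.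

Lemma rs_br a b x y : rs a x -> rs b y -> rs (fadd a b) (br x y).
Proof.
by move=> x_a y_b h Hh; rewrite br_leibniz (x_a h Hh) (y_b h Hh) brZl brZr -scalerDl.
Qed.

Lemma H_opp t : H t -> H (- t).
Proof. by move/E0_eq_H/rsN/E0_eq_H. Qed.

Lemma form_rs_opp a b y z : rs a y -> rs b z -> form y z != 0 -> same_weight b (fopp a).
Proof.
move=> y_a z_b yz h Hh; apply/eqP; rewrite /fopp -addr_eq0.
have : (b h + a h) * form y z = 0.
  rewrite mulrDl -formZr -formZl -(y_a h Hh) -(z_b h Hh).
  by rewrite [br h y]br_antisym formNl form_invariant addrN.
by move/eqP; rewrite mulf_eq0 (negbTE yz) orbF.
Qed.

Lemma rs_pairing_nondeg a y : rs a y -> y != 0 -> exists2 w, rs (fopp a) w & form y w != 0.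
Proof.
move=> y_a /form_nondeg[z]; have [s [s_rs ->]] := root_decomposition z.
rewrite form_sumr => yz; apply: NNPP => nw; move/eqP: yz; apply.
apply: (big_ind_In (K := eq^~ 0)) => [|u v -> ->|p /s_rs p_rs]; rewrite ?addr0 //.
case: (eqVneq (form y p.2) 0) => // yp; case: nw; exists p.2 => //.
exact: rs_same_weight (form_rs_opp y_a p_rs yp) p_rs.
Qed.

Lemma is_root_opp a : is_root br H a -> is_root br H (fopp a).
Proof.
case=> y [y_a /eqP y0]; have [w w_a yw] := rs_pairing_nondeg y_a y0.
by exists w; split=> // w0; rewrite w0 form0r eqxx in yw.
Qed.

Lemma nonisotropic_same_weight a b : same_weight a b -> nonisotropic a -> nonisotropic b.
Proof. by move=> ab [t [[Ht ta] tt]]; exists t; split=> //; split=> // h Hh; rewrite -ab ?ta. Qed.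

Lemma nonisotropic_opp a : nonisotropic a -> nonisotropic (fopp a).
Proof.
move=> [t [[Ht ta] tt]]; exists (- t); rewrite formNl formNr opprK; split=> //.
by split=> [|h Hh]; [exact: H_opp | rewrite /fopp ta // formNr].
Qed.

Lemma Rx_opp a : Rx a -> Rx (fopp a).
Proof. by case=> a_root a_ni; split; [exact: is_root_opp | exact: nonisotropic_opp]. Qed.

Lemma E0_perp_H_eq0 u : rs fzero u -> (forall h, H h -> form h u = 0) -> u = 0.
Proof.
move=> u0 uH; apply: NNPP => /eqP/form_nondeg[y].
have [s [s_rs ->]] := root_decomposition y; rewrite form_sumr => /eqP; apply.
apply: (big_ind_In (K := eq^~ 0)) => [|v w -> ->|p /s_rs p_rs]; rewrite ?addr0 //.
case: (eqVneq (form u p.2) 0) => // /(form_rs_opp u0 p_rs) p_0.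
rewrite formC uH //; apply/E0_eq_H; apply: rs_same_weight p_rs => h Hh.
by rewrite p_0 // /fopp oppr0.
Qed.

Lemma br_rs_opp a t z w :
  t_of form H a t -> rs a z -> rs (fopp a) w -> br z w = form z w *: t.
Proof.
case=> Ht ta z_a w_a; apply/eqP; rewrite -subr_eq0; apply/eqP/E0_perp_H_eq0.
  apply: rsD; last by apply/rsN/rsZ/E0_eq_H.
  by apply: rs_same_weight (rs_br z_a w_a) => h _; apply: subrr.
move=> h Hh; rewrite formDr formNr formZr -form_invariant (z_a h Hh) formZl -ta //.
by rewrite mulrC subrr.
Qed.

Lemma t_of_core a t : Rx a -> t_of form H a t -> core t.
Proof.
move=> Ra ta; have [[z [z_a /eqP z0]] _] := Ra.
have [w w_a zw] := rs_pairing_nondeg z_a z0.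
have -> : t = (form z w)^-1 *: br z w by rewrite (br_rs_opp ta z_a w_a) scalerA mulVf ?scale1r.
by apply/core_scale/core_br; [exact: core_root Ra z_a | exact: core_root (Rx_opp Ra) w_a].
Qed.

Lemma core_center_perp x : core_center x -> core_perp x.
Proof.
case=> _ x_central y; elim=> {y} [a y Ra y_a | | y z _ xy _ xz | c y _ xy | y z y_core _ _ _].
- have [t [ta tt]] := Ra.2.
  have -> : y = (form t t)^-1 *: br t y.
    by rewrite (y_a t ta.1) (ta.2 t ta.1) scalerA mulVf ?scale1r.
  by rewrite formZr -form_invariant x_central ?form0l ?mulr0 //; exact: t_of_core Ra ta.
- exact: form0r.
- by rewrite formDr xy xz addr0.
- by rewrite formZr xy mulr0.
- by rewrite -form_invariant x_central ?form0l.
Qed.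

Inductive monomial : (E -> CC) -> E -> Prop :=
  | monomial_root a x : Rx a -> rs a x -> monomial a x
  | monomial_br a x d w : Rx a -> rs a x -> monomial d w -> monomial (fadd a d) (br x w).

Lemma monomial_rs d y : monomial d y -> rs d y.
Proof. by elim=> // a x d' w _ x_a _ w_d; apply: rs_br. Qed.

Lemma monomial_core d y : monomial d y -> core y.
Proof.
elim=> [a x Ra x_a | a x d' w Ra x_a _ w_core]; first exact: core_root Ra x_a.
by apply: core_br w_core; apply: core_root Ra x_a.
Qed.

Lemma monomialZ c d y : monomial d y -> monomial d (c *: y).
Proof.
case=> [a x Ra x_a | a x d' w Ra x_a w_mon]; first by apply: monomial_root Ra (rsZ c x_a).
by rewrite -brZl; apply: monomial_br Ra (rsZ c x_a) w_mon.
Qed.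

Lemma sum_of_monomialZ c v : sum_of monomial v -> sum_of monomial (c *: v).
Proof.
case=> s [s_mon ->]; rewrite scaler_sumr; apply: sum_of_big => p /s_mon p_mon.
exact: sum_of_gen (monomialZ c p_mon).
Qed.

Lemma sum_of_br_root a x v : Rx a -> rs a x -> sum_of monomial v -> sum_of monomial (br x v).
Proof.
move=> Ra x_a [s [s_mon ->]]; rewrite br_sumr; apply: sum_of_big => p /s_mon p_mon.
exact: sum_of_gen (monomial_br Ra x_a p_mon).
Qed.

Lemma sum_of_br_monomial m u n v : monomial m u -> monomial n v -> sum_of monomial (br u v).
Proof.
move=> u_mon; elim: u_mon n v => [a x Ra x_a | a x d w Ra x_a _ IHw] n v v_mon.
  exact: sum_of_gen (monomial_br Ra x_a v_mon).
have -> : br (br x w) v = br x (br w v) + (-1) *: br w (br x v).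
  by rewrite br_leibniz scaleN1r addrK.
apply: sum_ofD; first exact: sum_of_br_root Ra x_a (IHw _ _ v_mon).
exact/sum_of_monomialZ/(IHw _ _ (monomial_br Ra x_a v_mon)).
Qed.

Lemma sum_of_monomial_br u v :
  sum_of monomial u -> sum_of monomial v -> sum_of monomial (br u v).
Proof.
move=> [s [s_mon ->]] [t [t_mon ->]]; rewrite br_suml; apply: sum_of_big => p /s_mon p_mon.
by rewrite br_sumr; apply: sum_of_big => q /t_mon /(sum_of_br_monomial p_mon).
Qed.

Lemma core_sum_of_monomials y : core y -> sum_of monomial y.
Proof.
elim=> [a x Ra x_a | | u v _ ? _ ? | c u _ ? | u v _ ? _ ?].
- exact: sum_of_gen (monomial_root Ra x_a).
- exact: sum_of0.
- exact: sum_ofD.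
- exact: sum_of_monomialZ.
- exact: sum_of_monomial_br.
Qed.

Lemma bracket_sum_rs sigma x : bracket_sum sigma x -> rs sigma x.
Proof.
elim=> [a y z _ y_a z_a | | y z _ y_s _ z_s | c y _ y_s]; last first.
- exact: rsZ.
- exact: rsD.
- exact: rs0.
apply: rs_same_weight (rs_br y_a z_a) => h _.
by rewrite /fadd /fopp addrAC subrr add0r.
Qed.

Lemma monomial_bracket_sum sigma d y :
  R0 br form H sigma -> monomial d y -> same_weight d sigma -> bracket_sum sigma y.
Proof.
case=> _ sigma_iso [a x Ra x_a | a x d' w Ra x_a w_mon] d_sigma.
  by case: sigma_iso; apply: nonisotropic_same_weight d_sigma Ra.2.
rewrite br_antisym -scaleN1r; apply/bs_scale/(@bs_gen _ _ _ _ _ (fopp a)).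
- exact: Rx_opp.
- apply: rs_same_weight (monomial_rs w_mon) => h Hh.
  by rewrite /fadd /fopp -(d_sigma h Hh) /fadd addKr.
- by move=> h Hh; rewrite (x_a h Hh) /fopp opprK.
Qed.

Lemma sum_rs_other_weights_eq0 sigma l :
  (forall q, List.In q l -> rs q.1 q.2 /\ ~ same_weight q.1 sigma) ->
  rs sigma (\sum_(q <- l) q.2) -> \sum_(q <- l) q.2 = 0.
Proof.
suff sum_scale_eq0 c : (forall q, List.In q l -> rs q.1 q.2 /\ ~ same_weight q.1 sigma) ->
    rs sigma (\sum_(q <- l) c q *: q.2) -> \sum_(q <- l) c q *: q.2 = 0.
  by move/(sum_scale_eq0 (fun=> 1)); rewrite (eq_bigr _ (fun q _ => scale1r q.2)).
elim: l c => [|p l IHl] c l_other z_sigma; first by rewrite big_nil.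
have [p_rs /not_same_weight[h Hh p_h]] := l_other p (or_introl erefl).
set z := \sum_(q <- p :: l) c q *: q.2 in z_sigma *.
(* [ad h - p.1 h] kills the summand [p] and acts on [z] by [sigma h - p.1 h]. *)
have Dz : (sigma h - p.1 h) *: z = \sum_(q <- l) (c q * (q.1 h - p.1 h)) *: q.2.
  suff -> : (sigma h - p.1 h) *: z = \sum_(q <- p :: l) (c q * (q.1 h - p.1 h)) *: q.2.
    by rewrite big_cons subrr mulr0 scale0r add0r.
  rewrite scalerBl -(z_sigma h Hh) br_sumr scaler_sumr -sumrB; apply: eq_big_In => q q_l.
  have [q_rs _] := l_other q q_l.
  by rewrite brZr (q_rs h Hh) !scalerA -scalerBl mulrBr [p.1 h * _]mulrC.
have := IHl (fun q => c q * (q.1 h - p.1 h)) (fun q q_l => l_other q (or_intror q_l)).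
rewrite -Dz => /(_ (rsZ _ z_sigma))/eqP.
by rewrite scaler_eq0 subr_eq0 eq_sym (negbTE p_h) => /eqP.
Qed.

Lemma core_rs_bracket_sum sigma x :
  R0 br form H sigma -> core x -> rs sigma x -> bracket_sum sigma x.
Proof.
move=> sigma_R0 /core_sum_of_monomials[s [s_mon ->]] x_sigma.
have [l1 [l2 [l1_s l2_s sumE _]]] := split_big_In (fun q => same_weight q.1 sigma) snd s.
have bs1 : bracket_sum sigma (\sum_(q <- l1) q.2).
  apply: big_ind_In => [|u v|q /l1_s[/s_mon q_mon q_sigma]].
  - exact: bs_zero.
  - exact: bs_add.
  - exact: monomial_bracket_sum q_mon q_sigma.
suff l2_eq0 : \sum_(q <- l2) q.2 = 0 by rewrite sumE l2_eq0 addr0.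
apply: (sum_rs_other_weights_eq0 (sigma := sigma)).
  by move=> q /l2_s[/s_mon/monomial_rs q_rs q_sigma].
have := rsD x_sigma (rsN (bracket_sum_rs bs1)).
by rewrite sumE addrAC subrr add0r.
Qed.

Lemma core_center0 : core_center 0.
Proof. by split=> [|y _]; [exact: core_zero | exact: br0l]. Qed.

Lemma core_centerD x y : core_center x -> core_center y -> core_center (x + y).
Proof.
case=> x_core x_central [y_core y_central]; split=> [|z z_core]; first exact: core_add.
by rewrite brDl x_central // y_central // addr0.
Qed.

Lemma rs_nonisotropic_perp_eq0 b c : nonisotropic b -> rs b c -> core_perp c -> c = 0.
Proof.
move=> b_ni c_b c_perp; apply: NNPP => /eqP c0.
have Rb : Rx b by split=> //; exists c; split=> //; exact/eqP.
have [w w_b cw] := rs_pairing_nondeg c_b c0.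
by rewrite (c_perp w (core_root (Rx_opp Rb) w_b)) eqxx in cw.
Qed.

Lemma perp_core_weight_component b c l :
  rs b c -> (forall q, List.In q l -> rs q.1 q.2 /\ ~ same_weight q.1 b) ->
  core_perp (c + \sum_(q <- l) q.2) -> core_perp c.
Proof.
move=> c_b l_other x_perp y /core_sum_of_monomials[t [t_mon ->]].
rewrite form_sumr; apply: (big_ind_In (K := eq^~ 0)) => [|u v -> ->|q /t_mon q_mon].
- by [].
- exact: addr0.
have q_rs := monomial_rs q_mon.
case: (eqVneq (form c q.2) 0) => // /(form_rs_opp c_b q_rs) q_b.
have l_q : form (\sum_(r <- l) r.2) q.2 = 0.
  rewrite form_suml; apply: (big_ind_In (K := eq^~ 0)) => [|u v -> ->|r /l_other[r_rs r_b]].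
  - by [].
  - exact: addr0.
  case: (eqVneq (form r.2 q.2) 0) => // /(form_rs_opp r_rs q_rs) q_r.
  by case: r_b => h Hh; have := q_b h Hh; rewrite q_r // => /oppr_inj.
by have := x_perp _ (monomial_core q_mon); rewrite formDl l_q addr0.
Qed.

Section IsotropicComponents.
Hypothesis isotropic_perp_central : forall sigma x,
  R0 br form H sigma -> rs sigma x -> core_perp x -> core_center x.

Lemma rs_perp_core_central b c : rs b c -> core_perp c -> core_center c.
Proof.
move=> c_b c_perp; case: (eqVneq c 0) => [->|c0]; first exact: core_center0.
have [b_ni|b_iso] := classic (nonisotropic b).
  by rewrite (rs_nonisotropic_perp_eq0 b_ni c_b c_perp); exact: core_center0.
apply: (isotropic_perp_central _ c_b c_perp); split=> //.
by exists c; split=> //; exact/eqP.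
Qed.

Lemma core_perp_center x : core_perp x -> core_center x.
Proof.
have [s [s_rs ->]] := root_decomposition x.
have [n] := ubnP (size s); elim: n s s_rs => // n IHn [|p s] s_rs lt_sn x_perp.
  by rewrite big_nil; exact: core_center0.
have [l1 [l2 [l1_s l2_s sumE size_l2]]] := split_big_In (fun q => same_weight q.1 p.1) snd s.
set c := p.2 + \sum_(q <- l1) q.2.
have c_p : rs p.1 c.
  apply: rsD; first by apply: s_rs; left.
  apply: (big_ind_In (K := rs p.1)) => [|u v|q /l1_s[q_s q_p]]; [exact: rs0 | exact: rsD |].
  by apply: rs_same_weight q_p _; apply: s_rs; right.
have l2_other q : List.In q l2 -> rs q.1 q.2 /\ ~ same_weight q.1 p.1.
  by case/l2_s => q_s q_p; split=> //; apply: s_rs; right.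
have x_split : \sum_(q <- p :: s) q.2 = c + \sum_(q <- l2) q.2.
  by rewrite big_cons sumE addrA.
rewrite x_split in x_perp *.
have c_perp := perp_core_weight_component c_p l2_other x_perp.
apply: core_centerD; first exact: rs_perp_core_central c_p c_perp.
apply: IHn; first by move=> q /l2_other[].
  exact: leq_ltn_trans size_l2 lt_sn.
by move=> y y_core; have := x_perp y y_core; rewrite formDl c_perp // add0r.
Qed.

End IsotropicComponents.

End ExtendedAffine.

Theorem lemma2p7 (E : lmodType CC) (br : E -> E -> E) (form : E -> E -> CC)
    (H : E -> Prop) :
  is_EALA br form H ->
  (tame br form H <->
   forall sigma : E -> CC, R0 br form H sigma ->
     forall x : E,
       (root_space br H sigma x /\ core_perp br form H x) <->
       (core_center br form H x /\ bracket_sum br form H sigma x)).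
Proof.
move=> [lieE formE [_ _ root_decomposition E0_eq_H] _ _].
have center_perp := core_center_perp lieE formE root_decomposition E0_eq_H.
split=> [tameE sigma sigma_R0 x | isotropic_iff].
  split=> [[x_sigma x_perp] | [x_center x_bs]].
    have x_center := (tameE x).1 x_perp; have [x_core _] := x_center.
    split=> //; exact (core_rs_bracket_sum lieE formE root_decomposition E0_eq_H sigma_R0 x_core x_sigma).
  by split; [exact (bracket_sum_rs lieE x_bs) | exact: center_perp].
move=> x; split; last exact: center_perp.
apply: (core_perp_center lieE formE root_decomposition E0_eq_H) => sigma y sigma_R0 y_sigma y_perp.
exact: ((isotropic_iff sigma sigma_R0 y).1 (conj y_sigma y_perp)).1.
Qed.
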